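(* Let $K$ be a field of characteristic $\neq 2$ and $A\in K[t]\setminus K$ non-constant. Then the equation $x^2+y^2+z^2=Axyz$ has a fundamental Markoff triple if and only if $K$ contains a square root $i$ of $-1$. Moreover, if $i\in K$, every fundamental Markoff triple has the form $(0,\varepsilon if,f)$ for some $f\in K[t]\setminus K$ and $\varepsilon\in\{\pm1\}$.
   Context: Solutions are triples $(x,y,z)\in K[t]^3$ with $x^2+y^2+z^2=Axyz$. The degree of the zero polynomial is $-\infty$. The height is $\max\{\deg x,\deg y,\deg z\}$. A Markoff triple is a solution with positive height and $\deg x\le\deg y\le\deg z$; it is fundamental if moreover $\deg y=\deg z$. *)

From HB Require Import structures.
From mathcomp Require Import all_boot all_order all_algebra.
Set Implicit Arguments. Unset Strict Implicit. Unset Printing Implicit Defensive.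
Import GRing.Theory.
Local Open Scope ring_scope.

(* Degrees are encoded through [size] (size p = deg p + 1, size 0 = 0, which
   matches deg 0 = -oo for all comparisons). *)

Definition markoff_sol (K : fieldType) (A x y z : {poly K}) : Prop :=
  x ^+ 2 + y ^+ 2 + z ^+ 2 = A * x * y * z.

(* height = max deg; positive height <-> max size >= 2. *)
Definition markoff_triple (K : fieldType) (A x y z : {poly K}) : Prop :=
  [/\ markoff_sol A x y z,
      (1 < maxn (size x) (maxn (size y) (size z)))%N,
      (size x <= size y)%N & (size y <= size z)%N].

Definition fundamental_markoff (K : fieldType) (A x y z : {poly K}) : Prop :=
  markoff_triple A x y z /\ size y = size z.

From HB Require Import structures.
From mathcomp Require Import all_boot all_order all_algebra.
From mathcomp Require Import zify.
Set Implicit Arguments. Unset Strict Implicit. Unset Printing Implicit Defensive.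
Import GRing.Theory.
Local Open Scope ring_scope.

(* If x != 0, then deg (A x y z) = deg A + deg x + 2 deg z > 2 deg z, which
   bounds the degree of x^2 + y^2 + z^2; so a fundamental triple has x = 0 and
   reduces to y^2 + z^2 = 0, i.e. y = +-i z with i^2 = -1.  Comparing leading
   coefficients in y^2 = -z^2 produces i from any such triple. *)

Lemma sqr_addr_eq0 (R : idomainType) (i y z : R) :
  i ^+ 2 = -1 -> y ^+ 2 + z ^+ 2 = 0 -> y = i * z \/ y = - (i * z).
Proof.
move=> hi e.
have : (y - i * z) * (y + i * z) = 0.
  by rewrite -subr_sqr exprMn hi mulN1r opprK.
by move/eqP; rewrite mulf_eq0 subr_eq0 addr_eq0 => /orP[]/eqP; [left | right].
Qed.

Lemma sqr_addr_mul_sqrtN1 (R : comPzRingType) (i z : R) :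
  i ^+ 2 = -1 -> (i * z) ^+ 2 + z ^+ 2 = 0.
Proof. by move=> hi; rewrite exprMn hi mulN1r addNr. Qed.

Lemma lead_coef_sqr_addr_eq0 (K : fieldType) (y z : {poly K}) :
  z != 0 -> y ^+ 2 + z ^+ 2 = 0 -> (lead_coef y / lead_coef z) ^+ 2 = -1.
Proof.
move=> zn /eqP; rewrite addr_eq0 => /eqP/(congr1 lead_coef).
rewrite lead_coefN !lead_coef_exp => e.
by rewrite expr_div_n e mulNr divff // expf_neq0 // lead_coef_eq0.
Qed.

Lemma markoff_sol0 (K : fieldType) (A y z : {poly K}) :
  markoff_sol A 0 y z <-> y ^+ 2 + z ^+ 2 = 0.
Proof. by rewrite /markoff_sol mulr0 !mul0r expr0n add0r. Qed.

Lemma size_sum_sqr_lt_mul (R : idomainType) (A x y z : {poly R}) :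
  (1 < size A)%N -> x != 0 -> (size x <= size z)%N -> size y = size z ->
  (size (x ^+ 2 + y ^+ 2 + z ^+ 2)%R < size (A * x * y * z)%R)%N.
Proof.
move=> hA xn hxz hyz.
have sx : (0 < size x)%N by rewrite size_poly_gt0.
have zn : z != 0 by rewrite -size_poly_gt0 (leq_trans sx hxz).
have yn : y != 0 by rewrite -size_poly_gt0 hyz size_poly_gt0.
have An : A != 0 by rewrite -size_poly_gt0 ltnW.
have sz : (0 < size z)%N by rewrite size_poly_gt0.
have size_sqr (p : {poly R}) :
    (size p <= size z)%N -> (size (p ^+ 2)%R <= ((size z).-1 * 2).+1)%N.
  by move=> hp; apply: leq_trans (size_poly_exp_leq _ _) _; lia.
have size_lhs : (size (x ^+ 2 + y ^+ 2 + z ^+ 2)%R <= ((size z).-1 * 2).+1)%N.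
  apply: leq_trans (size_polyD _ _) _; rewrite geq_max size_sqr // andbT.
  by apply: leq_trans (size_polyD _ _) _; rewrite geq_max !size_sqr ?hyz.
apply: leq_ltn_trans size_lhs _.
by rewrite !size_mul ?mulf_neq0 // -!subn1; lia.
Qed.

Lemma markoff_sol_size_eq_x0 (K : fieldType) (A x y z : {poly K}) :
  (1 < size A)%N -> markoff_sol A x y z ->
  (size x <= size z)%N -> size y = size z -> x = 0.
Proof.
move=> hA hs hxz hyz; have [// | xn] := eqVneq x 0.
by have := size_sum_sqr_lt_mul hA xn hxz hyz; rewrite hs ltnn.
Qed.

Lemma fundamental_markoffE (K : fieldType) (A x y z : {poly K}) :
  (1 < size A)%N ->
  fundamental_markoff A x y z <->
  [/\ x = 0, (1 < size z)%N, size y = size z & y ^+ 2 + z ^+ 2 = 0].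
Proof.
move=> hA; split.
- move=> [[hs hmax hxy hyz] eyz].
  have x0 := markoff_sol_size_eq_x0 hA hs (leq_trans hxy hyz) eyz.
  move: hs hmax; rewrite x0 markoff_sol0 eyz size_poly0 maxnn max0n.
  by split.
- move=> [-> hz eyz e]; split=> //.
  by split; rewrite ?markoff_sol0 ?size_poly0 ?eyz ?maxnn ?max0n.
Qed.

Lemma fundamental_markoff_sqrtN1 (K : fieldType) (A f : {poly K}) (i : K) :
  (1 < size A)%N -> i ^+ 2 = -1 -> (1 < size f)%N ->
  fundamental_markoff A 0 (i *: f) f.
Proof.
move=> hA hi hf; apply/fundamental_markoffE => //.
have i0 : i != 0.
  by apply: contra_eq_neq hi => ->; rewrite expr0n eq_sym oppr_eq0 oner_eq0.
split; rewrite ?size_scale //.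
by rewrite -mul_polyC sqr_addr_mul_sqrtN1 // -rmorphXn hi rmorphN1.
Qed.

Theorem lemma2p3 (K : fieldType) (A : {poly K})
  (hchar : (2%:R : K) != 0) (hA : (1 < size A)%N) :
  ((exists x y z : {poly K}, fundamental_markoff A x y z) <->
   (exists i : K, i ^+ 2 = -1)) /\
  (forall i : K, i ^+ 2 = -1 ->
   forall x y z : {poly K}, fundamental_markoff A x y z ->
   exists (f : {poly K}) (eps : K),
     (1 < size f)%N /\ (eps = 1 \/ eps = -1) /\
     x = 0 /\ y = (eps * i) *: f /\ z = f).
Proof.
split; first split.
- move=> [x [y [z /(fundamental_markoffE _ _ _ hA) [_ hz _ e]]]].
  exists (lead_coef y / lead_coef z).
  by apply: lead_coef_sqr_addr_eq0 e; rewrite -size_poly_gt0 ltnW.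
- move=> [i hi]; exists 0, (i *: 'X), 'X.
  by apply: fundamental_markoff_sqrtN1; rewrite ?size_polyX.
- move=> i hi x y z /(fundamental_markoffE _ _ _ hA) [-> hz _ e].
  have hiP : i%:P ^+ 2 = -1 :> {poly K} by rewrite -rmorphXn hi rmorphN1.
  exists z; have [hy | hy] := sqr_addr_eq0 hiP e.
  + exists 1; split=> //; split; first by left.
    by rewrite mul1r -mul_polyC.
  + exists (-1); split=> //; split; first by right.
    by rewrite mulN1r scaleNr -mul_polyC.
Qed.
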